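(* Let $\Omega$ be a topological space and $\mathcal{F}$ a convex cone of continuous real-valued functions on $\Omega$ containing all real constants and satisfying the maximum principle; let $\mathcal{G}$ be the complete lattice cone generated by $\mathcal{F}$. Let $K_1,K_2,\dots$ be non-empty compact $\mathcal{F}$-convex subsets of $\Omega$ with $K_i\subsetneq\operatorname{int}K_{i+1}$ for all $i$ and $\bigcup_{i=1}^\infty K_i=\Omega$. Then there exists a continuous, proper, non-negative function $p\in\mathcal{G}$ such that for every compact $L\subset\Omega$ there are finitely many $f_1,\dots,f_m\in\mathcal{F}$ with $p=\max\{f_1,\dots,f_m\}$ on $L$.
   Context: A compact set $K$ is $\mathcal{F}$-convex if $K=\{\omega\in\Omega\mid f(\omega)\leq\sup f(K)\text{ for all }f\in\mathcal{F}\}$. $\mathcal{F}$ satisfies the maximum principle if for every non-constant $f\in\mathcal{F}$, non-empty compact $K$ and open $U\supset K$, $\sup f(K)<\sup f(U)$. The complete lattice cone generated by $\mathcal{F}$ is the smallest set of functions $\Omega\to(-\infty,\infty]$ containing $\mathcal{F}$, closed under nonnegative linear combinations and pointwise suprema of arbitrary families. Proper: preimages of compact sets are compact. *)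

From HB Require Import structures.
From mathcomp Require Import all_boot all_order all_algebra.
From mathcomp Require Import all_classical all_reals all_analysis.
Set Implicit Arguments. Unset Strict Implicit. Unset Printing Implicit Defensive.
Import Order.TTheory GRing.Theory Num.Theory numFieldNormedType.Exports.
Local Open Scope classical_set_scope.
Local Open Scope ring_scope.

Section Defs.
Context {R : realType} {T : topologicalType}.

Definition fsup (f : T -> R) (A : set T) : \bar R :=
  ereal_sup [set (f x)%:E | x in A].

Definition convex_cone (F : set (T -> R)) : Prop :=
  forall f g (a b : R), F f -> F g -> 0 <= a -> 0 <= b ->
    F (fun x => a * f x + b * g x).

Definition contains_constants (F : set (T -> R)) : Prop :=
  forall c : R, F (fun _ => c).

Definition max_principle (F : set (T -> R)) : Prop :=
  forall f, F f -> ~ (exists c : R, forall x, f x = c) ->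
  forall K U : set T, K !=set0 -> compact K -> open U -> K `<=` U ->
    (fsup f K < fsup f U)%E.

Definition F_convex (F : set (T -> R)) (K : set T) : Prop :=
  compact K /\ K = [set w | forall f, F f -> ((f w)%:E <= fsup f K)%E].

Definition lattice_cone_closed (F : set (T -> R)) (S : set (T -> \bar R)) : Prop :=
  [/\ forall f, F f -> S (fun x => (f x)%:E),
      forall g h (a b : R), S g -> S h -> 0 <= a -> 0 <= b ->
        S (fun x => (a%:E * g x + b%:E * h x)%E)
    & forall A : set (T -> \bar R), A !=set0 -> A `<=` S ->
        S (fun x => ereal_sup [set g x | g in A])].

Definition gen_lattice_cone (F : set (T -> R)) : set (T -> \bar R) :=
  [set g | forall S, lattice_cone_closed F S -> S g].

Definition proper_fun (p : T -> R) : Prop :=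
  forall C : set R, compact C -> compact (p @^-1` C).

End Defs.

(* For a point z outside the non-empty F-convex compact set
   K i, the defining property of F-convexity gives f in F with
   f z > sup f(K i); rescaling with the cone and constant axioms produces
   g in F with g <= 0 on K i and g z as large as we like.  By compactness
   of the annulus K (i+2) \ int K (i+1), finitely many such g (the
   "level i functions") have a maximum exceeding i on the annulus.  The
   function p is the pointwise maximum of 0 and all level functions:
   on K j the levels >= j are non-positive, so there p is the finite
   maximum of 0 and the levels < j.  This local finiteness gives
   continuity and the local representation, the level bounds give
   properness, and p is a supremum of members of F. *)

From HB Require Import structures.
From mathcomp Require Import all_boot all_order all_algebra.
From mathcomp Require Import all_classical all_reals all_analysis.
Set Implicit Arguments.
Unset Strict Implicit.
Unset Printing Implicit Defensive.
Import Order.TTheory GRing.Theory Num.Theory numFieldNormedType.Exports.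
Local Open Scope classical_set_scope.
Local Open Scope ring_scope.

(* A maximum of finitely many functions, clipped below by 0, can be
   rewritten as a maximum indexed by an ordinal whose first term is the
   zero function; this is the shape required by the theorem. *)
Lemma bigmax_seq_ord {R : realType} {T : Type} (l : seq (T -> R)) :
  exists (m : nat) (f : 'I_m.+1 -> T -> R),
    (forall i, f i = (fun=> (0 : R)) \/ f i \in l) /\
    (forall x, \big[Num.max/0]_(g <- l) g x = \big[Num.max/f ord0 x]_(i < m.+1) f i x).
Proof.
pose z : T -> R := fun=> 0.
exists (size l), (fun i => nth z (z :: l) i); split.
  move=> i; have : (i < size (z :: l))%N by exact: ltn_ord.
  by move=> /(mem_nth z); rewrite in_cons => /predU1P.
move=> x; rewrite big_ord_recl /= (big_nth z) big_mkord.
by rewrite max_r // bigmax_ge_id.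
Qed.

Lemma bigmax_continuous {R : realType} {X : topologicalType} (l : seq (X -> R)) :
  (forall g, g \in l -> continuous g) ->
  continuous (fun x => \big[Num.max/0]_(g <- l) g x).
Proof.
elim: l => [|g l IH] gcont x.
  by under eq_fun do rewrite big_nil; exact: cvg_cst.
under eq_fun do rewrite big_cons.
apply: (@continuous_max _ _ g); first by apply: gcont; rewrite mem_head.
by apply: IH => h hl; apply: gcont; rewrite in_cons hl orbT.
Qed.

Definition sublist_filter {I : eqType} (D : set I) : set_system (seq I) :=
  [set B | exists2 s0 : seq I, (forall i, i \in s0 -> D i) &
                       forall s : seq I, {subset s0 <= s} -> B s].

Lemma sublist_filter_filter {I : eqType} (D : set I) : Filter (sublist_filter D).
Proof.
split.
- by exists [::].
- move=> A B [s0 Ds0 As0] [s1 Ds1 Bs1]; exists (s0 ++ s1).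
    by move=> i; rewrite mem_cat => /orP[/Ds0|/Ds1].
  by move=> s sub; split; [apply: As0|apply: Bs1] => i si; apply: sub;
    rewrite mem_cat si ?orbT.
- by move=> A B AB [s0 Ds0 As0]; exists s0 => // s /As0 /AB.
Qed.

(* Finite subcovers in an arbitrary (not necessarily pointed) space:
   if every point of a compact set A has a neighbourhood U i with D i,
   finitely many of the U i, i in D, cover A. *)
Lemma compact_seq_subcover {X : topologicalType} {I : eqType} (D : set I)
    (U : I -> set X) (A : set X) :
  compact A -> (forall x, A x -> exists2 i, D i & nbhs x (U i)) ->
  exists s : seq I, (forall i, i \in s -> D i) /\
                    (forall x, A x -> exists2 i, i \in s & U i x).
Proof.
move=> /compact_near_coveringP cA loc.
have [] := cA (seq I) (sublist_filter D) (fun s x => exists2 i, i \in s & U i x)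
  (sublist_filter_filter D).
  move=> x /loc[i Di Ui]; exists (U i, [set s | i \in s]).
    split=> //; exists [:: i] => [j|s]; first by rewrite inE => /eqP->.
    by apply; rewrite mem_head.
  by case=> y s [/= Uy si]; exists i.
move=> s0 Ds0 cov; exists s0; split=> //; exact: cov.
Qed.

Section Separation.
Context {R : realType} {T : topologicalType} (F : set (T -> R)).

Lemma F_convex_excluded (A : set T) (z : T) :
  F_convex F A -> A !=set0 -> ~ A z ->
  exists f c, [/\ F f, forall w, A w -> f w <= c & c < f z].
Proof.
move=> [_ Aeq] [w0 Aw0] nAz.
have [f Ff fz_gt] : exists2 f, F f & (fsup f A < (f z)%:E)%E.
  apply: contrapT => nosep; apply: nAz; rewrite Aeq => f Ff.
  by rewrite leNgt; apply/negP => lt; apply: nosep; exists f.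
have ub w : A w -> ((f w)%:E <= fsup f A)%E.
  by move=> Aw; apply: ereal_sup_ubound; exists w.
move: fz_gt (ub w0 Aw0) (ub); case: (fsup f A) => [c| |] // cz _ ubc.
exists f, c; split=> // [w /ubc|]; by rewrite ?lee_fin -?lte_fin.
Qed.

Hypotheses (Fcone : convex_cone F) (Fconst : contains_constants F).

Lemma F_convex_separation (A : set T) (z : T) (r : R) :
  F_convex F A -> A !=set0 -> ~ A z ->
  exists g, [/\ F g, forall w, A w -> g w <= 0 & r < g z].
Proof.
move=> Aconv A0 nAz; have [f [c [Ff fc cz]]] := F_convex_excluded Aconv A0 nAz.
have gap : 0 < f z - c by rewrite subr_gt0.
have r1 : 0 < `|r| + 1 by rewrite ltr_wpDl.
pose a := (`|r| + 1) / (f z - c).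
have a0 : 0 < a by rewrite divr_gt0.
(* g = a (f - c), written as a cone combination of f and a constant *)
exists (fun x => a * f x + 1 * (- (a * c))); split.
- by apply: Fcone; rewrite ?ltW ?ler01.
- move=> w Aw; rewrite mul1r -mulrN -mulrDr.
  by rewrite mulr_ge0_le0 ?(ltW a0) // subr_le0 fc.
- rewrite mul1r -mulrN -mulrDr divfK ?gt_eqF //.
  by rewrite (le_lt_trans (ler_norm r)) // ltrDl.
Qed.

End Separation.

Definition level_functions {R : realType} {T : topologicalType}
    (F : set (T -> R)) (K : nat -> set T) (i : nat) (s : seq (T -> R)) : Prop :=
  [/\ forall g, g \in s -> F g,
      forall g, g \in s -> forall w, K i w -> g w <= 0
    & forall x, K i.+2 x -> ~ interior (K i.+1) x -> exists2 g, g \in s & i%:R < g x].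

Section LevelFunctions.
Context {R : realType} {T : topologicalType} (F : set (T -> R)) (K : nat -> set T).
Hypotheses (Fcone : convex_cone F) (Fconst : contains_constants F)
  (Fcont : forall f, F f -> continuous f) (K0 : forall i, K i !=set0)
  (Kconv : forall i, F_convex F (K i)) (Kint : forall i, K i `<=` interior (K i.+1)).

(* Separation at every point of the annulus, followed by compactness. *)
Lemma level_functions_exist i : exists s, level_functions F K i s.
Proof.
pose good g := F g /\ forall w, K i w -> g w <= 0.
have cA : compact (K i.+2 `&` ~` interior (K i.+1)).
  by apply: compact_closedI; [exact: (Kconv _).1 | exact/open_closedC/open_interior].
have [|s [sgood scov]] := compact_seq_subcover (D := good)
  (U := fun g => g @^-1` [set y | i%:R < y]) cA.
  move=> x [_ nIx].
  have nKx : ~ K i x by move/Kint.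
  have [g [Fg g0 gx]] := F_convex_separation Fcone Fconst i%:R (Kconv i) (K0 i) nKx.
  exists g => //.
  by apply: cvgr_gt gx; exact: Fcont.
by exists s; split=> [g /sgood[]|g /sgood[]|x Kx nIx] //; exact: scov.
Qed.

End LevelFunctions.

Section Exhaustion.
Context {R : realType} {Omega : topologicalType} (F : set (Omega -> R))
  (K : nat -> set Omega).
Hypotheses (Fcont : forall f, F f -> continuous f) (F0 : F (fun=> 0))
  (Kcompact : forall i, compact (K i))
  (Kint : forall i, K i `<=` interior (K i.+1)).
Variable s : nat -> seq (Omega -> R).
Hypothesis s_level : forall i, level_functions F K i (s i).
Variable N : Omega -> nat.
Hypothesis KN : forall x, K (N x) x.

Lemma level_F i g : g \in s i -> F g.
Proof. by case: (s_level i) => sF _ _; exact: sF. Qed.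

Lemma level_nonpos i g x : g \in s i -> K i x -> g x <= 0.
Proof. by move=> gsi; case: (s_level i) => _ snonpos _; exact: snonpos. Qed.

Lemma level_large i x :
  K i.+2 x -> ~ interior (K i.+1) x -> exists2 g, g \in s i & i%:R < g x.
Proof. by case: (s_level i) => _ _; exact. Qed.

Lemma K_le i j : (i <= j)%N -> K i `<=` K j.
Proof.
move=> /subnK <-; elim: (j - i)%N => [|d IH] //= x /IH.
by move=> /Kint /interior_subset.
Qed.

Definition levels (n : nat) : seq (Omega -> R) := flatten [seq s i | i <- iota 0 n].

Lemma mem_levels g n : reflect (exists2 i, (i < n)%N & g \in s i) (g \in levels n).
Proof.
apply: (iffP flatten_mapP) => -[i]; first by rewrite mem_iota => /andP[_ ?]; exists i.
by exists i; rewrite ?mem_iota.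
Qed.

Lemma levels_F n g : g \in levels n -> F g.
Proof. by move=> /mem_levels[i _ /level_F]. Qed.

Definition partial_max (n : nat) (x : Omega) : R :=
  \big[Num.max/0]_(g <- levels n) g x.

(* On K n the levels n, n+1, ... are non-positive, so the partial
   maxima stabilise from index n on. *)
Lemma partial_max_stable n j x : K n x -> (n <= j)%N -> partial_max j x = partial_max n x.
Proof.
move=> Knx /subnKC <-; rewrite /partial_max /levels iotaD map_cat flatten_cat.
rewrite big_cat_nested /=; congr (\big[_/_]_(_ <- _) _).
rewrite big_seq; apply: bigmax_eq_id => g.
move=> /flatten_mapP[i]; rewrite mem_iota add0n => /andP[ni _] gsi.
exact: level_nonpos gsi (K_le ni Knx).
Qed.

(* The exhaustion function: the stabilised value of the partial maxima. *)
Definition exhaustion (x : Omega) : R := partial_max (N x) x.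

Lemma exhaustionE j x : K j x -> exhaustion x = partial_max j x.
Proof.
move=> Kjx; rewrite /exhaustion -(partial_max_stable (KN x) (leq_addr j _)).
by rewrite (partial_max_stable Kjx) // leq_addl.
Qed.

Lemma exhaustion_ge0 x : 0 <= exhaustion x.
Proof. exact: bigmax_ge_id. Qed.

Lemma le_exhaustion i g x : g \in s i -> g x <= exhaustion x.
Proof.
move=> gsi; have Kx : K (i.+1 + N x) x by apply: K_le (KN x); rewrite leq_addl.
rewrite (exhaustionE Kx); apply: le_bigmax_seq => //.
by apply/mem_levels; exists i; rewrite // ltnS leq_addr.
Qed.

(* Near x the exhaustion coincides with the continuous function
   partial_max (N x + 1), since int K (N x + 1) is a neighbourhood of x. *)
Lemma exhaustion_continuous : continuous exhaustion.
Proof.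
move=> x; have Kx := Kint (KN x).
have near_eq : \forall y \near x, partial_max (N x).+1 y = exhaustion y.
  apply: filterS (open_nbhs_nbhs (conj (@open_interior _ _) Kx)).
  by move=> y /interior_subset Ky; rewrite (exhaustionE Ky).
rewrite /continuous_at (exhaustionE (interior_subset Kx)).
apply: cvg_trans (near_eq_cvg near_eq) _.
by apply: bigmax_continuous => g /levels_F; exact: Fcont.
Qed.

Lemma exhaustion_annulus k x :
  K k.+2 x -> ~ interior (K k.+1) x -> k%:R < exhaustion x.
Proof.
move=> Kx nIx; have [g gsk gx] := level_large Kx nIx.
exact: lt_le_trans gx (le_exhaustion _ gsk).
Qed.

(* Outside int K (k+1) the exhaustion exceeds k: either x lies in the
   annulus of level k, or, climbing one annulus, it exceeds k+1. *)
Lemma exhaustion_large k x : ~ interior (K k.+1) x -> k%:R < exhaustion x.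
Proof.
have [d Kx] : exists d, K (d + k.+2) x.
  by exists (N x); apply: K_le (KN x); rewrite leq_addr.
elim: d k Kx => [|d IH] k Kx nIx; first exact: exhaustion_annulus.
have [Ix|nIx'] := pselect (interior (K k.+2) x).
  exact: exhaustion_annulus (interior_subset Ix) nIx.
by apply: lt_trans (IH k.+1 _ nIx'); rewrite ?ltr_nat // -addSnnS.
Qed.

(* A compact C is bounded by some integer n, so its preimage is a closed
   subset of the compact K (n+1). *)
Lemma exhaustion_proper : proper_fun exhaustion.
Proof.
move=> C cC; have [M [_ CM]] := compact_bounded cC.
have /CM Cbound : M < `|M| + 1 by rewrite (le_lt_trans (ler_norm M)) // ltrDl.
pose n := Num.Def.archi_bound (`|M| + 1).
have Mn : `|M| + 1 < n%:R by apply: archi_boundP; rewrite addr_ge0.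
have closed_pre : closed (exhaustion @^-1` C).
  apply: preimage_closed; first by move=> y _; exact: exhaustion_continuous.
  exact: compact_closed (@Rhausdorff R) cC.
have sub : exhaustion @^-1` C `<=` K n.+1.
  move=> x Cx; apply: contrapT => nKx.
  have nIx : ~ interior (K n.+1) x by move/interior_subset.
  have := exhaustion_large nIx.
  by rewrite ltNge (le_trans (ler_norm _)) // ltW // (le_lt_trans (Cbound _ Cx)).
by apply: subclosed_compact closed_pre _ sub; exact: Kcompact.
Qed.

(* Every compact set lies in some K j, since the interiors of the
   increasing sets K j cover Omega. *)
Lemma compact_sub_K L : compact L -> exists j, L `<=` K j.
Proof.
move=> /compact_near_coveringP cL.
have [|j _ LK] := cL nat eventually (fun j x => K j x) _.
  move=> x _; exists (interior (K (N x).+1), [set j | ((N x).+1 <= j)%N]).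
    by split; [apply: open_nbhs_nbhs; split; [exact: open_interior | exact: Kint]
              | exists (N x).+1].
  by case=> y j [/= /interior_subset Ky le_j]; exact: (K_le le_j).
by exists j; apply: LK; rewrite /= leqnn.
Qed.

Definition level_family : set (Omega -> R) :=
  [set g | g = (fun=> 0) \/ exists i, g \in s i].

Lemma exhaustion_sup x : (exhaustion x)%:E =
  ereal_sup [set h x | h in [set (fun y => (g y)%:E) | g in level_family]].
Proof.
apply/eqP; rewrite eq_le; apply/andP; split.
  rewrite /exhaustion /partial_max -EFin_bigmax big_seq; apply: bigmax_le.
    by apply: ereal_sup_ubound; exists (fun=> 0%:E) => //; exists (fun=> 0) => //; left.
  move=> g /mem_levels[i _ gsi]; apply: ereal_sup_ubound.
  by exists (fun y => (g y)%:E) => //; exists g => //; right; exists i.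
apply: ge_ereal_sup => _ [_ [g [->|[i gsi]] <-] <-]; rewrite lee_fin.
  exact: exhaustion_ge0.
exact: le_exhaustion gsi.
Qed.

Lemma level_family_F g : level_family g -> F g.
Proof. by case=> [->|[i /level_F]]. Qed.

(* The exhaustion is the supremum of a family of members of F, hence
   lies in the complete lattice cone generated by F. *)
Lemma exhaustion_generated : gen_lattice_cone F (fun x => (exhaustion x)%:E).
Proof.
move=> S [SF _ Ssup]; rewrite (funext exhaustion_sup); apply: Ssup.
  by exists (fun=> 0%:E), (fun=> 0) => //; left.
by move=> _ [g /level_family_F Fg <-]; exact: SF.
Qed.

(* On a compact set L inside K j the exhaustion is the finite maximum
   of 0 and the functions of the levels below j. *)
Lemma exhaustion_local L : compact L ->
  exists (m : nat) (f : 'I_m.+1 -> Omega -> R),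
    (forall i, F (f i)) /\
    (forall x, L x -> exhaustion x = \big[Num.max/f ord0 x]_(i < m.+1) f i x).
Proof.
move=> /compact_sub_K[j LK].
have [m [f [f_mem f_max]]] := bigmax_seq_ord (levels j).
exists m, f; split=> [i|x Lx].
  by case: (f_mem i) => [->|/levels_F].
by rewrite (exhaustionE (LK x Lx)) -f_max.
Qed.

End Exhaustion.

Theorem mainTheorem13 (R : realType) (Omega : topologicalType)
  (F : set (Omega -> R)) (K : nat -> set Omega) :
  convex_cone F -> contains_constants F ->
  (forall f, F f -> continuous f) ->
  max_principle F ->
  (forall i, K i !=set0) ->
  (forall i, F_convex F (K i)) ->
  (forall i, K i `<` interior (K i.+1)) ->
  \bigcup_i K i = setT ->
  exists p : Omega -> R,
    [/\ continuous p, proper_fun p, (forall x, 0 <= p x),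
        gen_lattice_cone F (fun x => (p x)%:E)
      & forall L : set Omega, compact L ->
          exists (m : nat) (f : 'I_m.+1 -> Omega -> R),
            (forall i, F (f i)) /\
            (forall x, L x -> p x = \big[Num.max/f ord0 x]_(i < m.+1) f i x)].
Proof.
move=> Fcone Fconst Fcont _ K0 Kconv Kstrict Kcover.
have Kint i : K i `<=` interior (K i.+1) by case: (Kstrict i).
have Kcompact i : compact (K i) by case: (Kconv i).
have [s s_level] := choice (level_functions_exist Fcone Fconst Fcont K0 Kconv Kint).
have /choice[N KN] : forall x, exists n, K n x.
  by move=> x; have : [set: Omega] x by []; rewrite -Kcover => -[n _ Knx]; exists n.
exists (exhaustion s N); split.
- exact: (exhaustion_continuous Fcont Kint s_level KN).
- exact: (exhaustion_proper Fcont Kcompact Kint s_level KN).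
- exact: exhaustion_ge0.
- exact: (exhaustion_generated (Fconst 0) Kint s_level KN).
- exact: (exhaustion_local (Fconst 0) Kint s_level KN).
Qed.
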